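(* Any Turing recognizable language can be weakly verified by a rational-valued 2ADfA with arbitrary bounded error $\epsilon$. Moreover, the protocol achieves perfect completeness.
   Context: An affine state of an $m$-state affine register is a vector $v\in\mathbb{R}^m$ whose entries sum to $1$; affine operators are real matrices whose columns each sum to $1$; weighting observes basis state $e_j$ with probability $|v_j|/\|v\|_1$ and collapses the register to $e_j$. A 2ADfA is a two-way deterministic finite automaton on the read-only input $¢ w\$$ (left end-marker ¢, right end-marker \$), whose head may move left, right or stay, equipped with finitely many affine registers; at each step, depending on the deterministic state and scanned symbol, each register is either updated by an affine operator or weighted, and then the deterministic state and head move are determined by the state, symbol and weighting outcomes; it halts upon entering an accepting or rejecting state. Rational-valued means all affine operators have rational entries. The 2ADfA is the verifier in an Arthur–Merlin proof system: it communicates with an all-powerful prover through a communication cell and reveals its deterministic states, head moves and weighting outcomes (public coins). Weak verification with error $\epsilon<1/2$ (rational): there is a prover such that every $w\in L$ is accepted with probability at least $1-\epsilon$, and for every $w\notin L$ and every prover, $w$ is accepted with probability at most $\epsilon$ (non-halting allowed). Perfect completeness means every $w\in L$ is accepted with probability $1$. *)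

(* All quantities of the verifier are rationals (rat):
   "rational-valued" 2ADfA = all affine operators (and initial affine states)
   have rational entries; then all register contents and all branch
   probabilities are rationals as well. *)
From HB Require Import structures.
From mathcomp Require Import all_boot all_order all_algebra.
Set Implicit Arguments. Unset Strict Implicit. Unset Printing Implicit Defensive.
Import Order.TTheory GRing.Theory Num.Theory.
Local Open Scope ring_scope.

Inductive tm_move := TML | TMR.

Record TM (Sigma : finType) := {
  tm_state : finType;
  tm_tape : finType;
  tm_blank : tm_tape;
  tm_inp : Sigma -> tm_tape;
  tm_inp_inj : injective tm_inp;
  tm_inp_blank : forall a, tm_inp a != tm_blank;
  tm_start : tm_state;
  tm_acc : tm_state;
  tm_rej : tm_state;
  tm_acc_rej : tm_acc != tm_rej;
  tm_delta : tm_state -> tm_tape -> tm_state * tm_tape * tm_move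
}.

Record tm_config (Sigma : finType) (M : TM Sigma) := TMConfig {
  tmc_state : tm_state M;
  tmc_tape : int -> tm_tape M;
  tmc_head : int
}.

Definition tm_init (Sigma : finType) (M : TM Sigma) (w : seq Sigma) : tm_config M :=
  TMConfig (tm_start M)
    (fun i : int => match i with
                    | Posz n => if onth w n is Some a then tm_inp M a else tm_blank M
                    | Negz _ => tm_blank M
                    end)
    0.

Definition tm_step (Sigma : finType) (M : TM Sigma) (c : tm_config M) : tm_config M :=
  if (tmc_state c == tm_acc M) || (tmc_state c == tm_rej M) then c else
  let: (q', b, d) := tm_delta (tmc_state c) (tmc_tape c (tmc_head c)) in
  TMConfig q'
    (fun i => if i == tmc_head c then b else tmc_tape c i)
    (if d is TML then tmc_head c - 1 else tmc_head c + 1).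

Definition tm_accepts (Sigma : finType) (M : TM Sigma) (w : seq Sigma) : Prop :=
  exists n : nat, tmc_state (iter n (@tm_step Sigma M) (tm_init M w)) = tm_acc M.

Definition TM_recognizable (Sigma : finType) (L : seq Sigma -> Prop) : Prop :=
  exists M : TM Sigma, forall w, L w <-> tm_accepts M w.

Inductive tsym (Sigma : Type) := LEnd | REnd | Sym of Sigma.
Arguments LEnd {Sigma}. Arguments REnd {Sigma}.

Inductive hmove := MoveL | MoveS | MoveR.

Inductive raction (n : nat) := Apply of 'M[rat]_n | Weigh.
Arguments Weigh {n}.

Definition affine_vec n (v : 'cV[rat]_n) : Prop := \sum_i v i ord0 = 1.
Definition affine_op n (A : 'M[rat]_n) : Prop := forall j, \sum_i A i j = 1.

Record Verifier (Sigma : finType) := {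
  v_state : finType;
  v_comm : finType;
  v_reg : finType;
  v_dim : v_reg -> nat;
  v_init_reg : forall r, 'cV[rat]_(v_dim r);
  v_start : v_state;
  v_acc : pred v_state;
  v_rej : pred v_state;
  v_act : v_state -> tsym Sigma -> v_comm -> forall r, raction (v_dim r);
  (* next state and head move, depending moreover on the weighting outcomes
     (None for registers that were not weighted) *)
  v_next : v_state -> tsym Sigma -> v_comm ->
           {dffun forall r : v_reg, option 'I_(v_dim r)} -> v_state * hmove
}.

Arguments v_state {Sigma} v.
Arguments v_comm {Sigma} v.
Arguments v_reg {Sigma} v.
Arguments v_dim {Sigma} v r.
Arguments v_init_reg {Sigma} v r.
Arguments v_start {Sigma} v.
Arguments v_acc {Sigma} v.
Arguments v_rej {Sigma} v.
Arguments v_act {Sigma} v.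
Arguments v_next {Sigma} v.

Definition outcome (Sigma : finType) (V : Verifier Sigma) : finType :=
  {dffun forall r : v_reg V, option 'I_(v_dim V r)}.

Definition wf_verifier (Sigma : finType) (V : Verifier Sigma) : Prop :=
  (forall r, affine_vec (v_init_reg V r)) /\
  (forall q a g r, match v_act V q a g r with Apply A => affine_op A | Weigh => True end) /\
  (forall q, ~~ (v_acc V q && v_rej V q)).

Definition halted (Sigma : finType) (V : Verifier Sigma) (q : v_state V) : bool :=
  v_acc V q || v_rej V q.

(* public information of one step: state, head position, prover's symbol,
   weighting outcomes *)
Definition pub_step (Sigma : finType) (V : Verifier Sigma) : Type :=
  (v_state V * nat * v_comm V * outcome V)%type.

(* a (deterministic, all-powerful) prover: sees the input and the public history *)
Definition prover (Sigma : finType) (V : Verifier Sigma) : Type :=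
  seq Sigma -> seq (pub_step V) -> v_comm V.

Record vconfig (Sigma : finType) (V : Verifier Sigma) := VConfig {
  cf_state : v_state V;
  cf_head : nat;
  cf_regs : forall r, 'cV[rat]_(v_dim V r);
  cf_hist : seq (pub_step V)
}.

(* symbol at position i of  ¢ w $  (positions 0 .. size w + 1) *)
Definition tape_at (Sigma : finType) (w : seq Sigma) (i : nat) : tsym Sigma :=
  if i == 0%N then LEnd else if onth w i.-1 is Some a then Sym a else REnd.

(* the head never leaves the end-markers *)
Definition move_head (Sigma : finType) (w : seq Sigma) (i : nat) (m : hmove) : nat :=
  match m with
  | MoveL => i.-1
  | MoveS => i
  | MoveR => minn i.+1 (size w).+1
  end.

Definition l1norm n (v : 'cV[rat]_n) : rat := \sum_i `|v i ord0|.

Definition out_prob (Sigma : finType) (V : Verifier Sigma)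
  (acts : forall r, raction (v_dim V r)) (regs : forall r, 'cV[rat]_(v_dim V r))
  (o : outcome V) : rat :=
  \prod_(r : v_reg V)
    match acts r with
    | Apply _ => if o r is None then 1 else 0
    | Weigh => if o r is Some j then `|regs r j ord0| / l1norm (regs r) else 0
    end.

Definition upd_reg n (a : raction n) (oj : option 'I_n) (v : 'cV[rat]_n) : 'cV[rat]_n :=
  match a with
  | Apply A => A *m v
  | Weigh => if oj is Some j then delta_mx j ord0 else v
  end.

Definition vinit (Sigma : finType) (V : Verifier Sigma) : vconfig V :=
  VConfig (v_start V) 0 (v_init_reg V) [::].

(* one step of a probabilistic branch (configuration, probability) *)
Definition branch_step (Sigma : finType) (V : Verifier Sigma) (P : prover V)
  (w : seq Sigma) (b : vconfig V * rat) : seq (vconfig V * rat) :=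
  let: (c, p) := b in
  if halted (cf_state c) then [:: b] else
  let a := tape_at w (cf_head c) in
  let g := P w (cf_hist c) in
  let acts := v_act V (cf_state c) a g in
  [seq (let: (q', m) := v_next V (cf_state c) a g o in
        VConfig q' (move_head w (cf_head c) m)
          (fun r => upd_reg (acts r) (o r) (cf_regs c r))
          (rcons (cf_hist c) (cf_state c, cf_head c, g, o)),
        p * out_prob acts (cf_regs c) o) | o <- enum (outcome V)].

Definition vdist (Sigma : finType) (V : Verifier Sigma) (P : prover V)
  (w : seq Sigma) (t : nat) : seq (vconfig V * rat) :=
  iter t (fun s => flatten [seq branch_step P w b | b <- s]) [:: (vinit V, 1)].

Definition acc_prob_by (Sigma : finType) (V : Verifier Sigma) (P : prover V)
  (w : seq Sigma) (t : nat) : rat :=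
  \sum_(b <- vdist P w t | v_acc V (cf_state b.1)) b.2.

(* acceptance probability (the limit of the nondecreasing acc_prob_by) is >= p / <= p *)
Definition acc_prob_ge (Sigma : finType) (V : Verifier Sigma) (P : prover V)
  (w : seq Sigma) (p : rat) : Prop :=
  forall d : rat, 0 < d -> exists t, p - d <= acc_prob_by P w t.

Definition acc_prob_le (Sigma : finType) (V : Verifier Sigma) (P : prover V)
  (w : seq Sigma) (p : rat) : Prop :=
  forall t, acc_prob_by P w t <= p.

Definition weakly_verifies_perfect (Sigma : finType) (V : Verifier Sigma)
  (L : seq Sigma -> Prop) (eps : rat) : Prop :=
  (exists P : prover V, forall w, L w -> acc_prob_ge P w 1) /\
  (forall w, ~ L w -> forall P : prover V, acc_prob_le P w eps).

(* The prover sends the computation of the Turing machine as a sequence of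
   records: windows of the tape in which the cell under the head also carries
   the state, so that the successor of a record is obtained by applying a local
   rule to consecutive triples of cells.  The verifier checks the first record
   against its input; while reading each later record once, it computes the
   base-[#|cell|.+1] code x of the successor of the previous record and the code
   y of the current record in the two free coordinates of an affine register.
   An affine operator maps this register to (K(x - y), -K(x - y), 1), and
   weighing it observes the last coordinate with probability 1/(2K|x - y| + 1):
   surely if the records agree, with probability at most eps = 1/K otherwise;
   every other outcome rejects.  Hence the honest prover is accepted with
   probability 1, while a prover reaching an accepting record with probability
   above eps has exhibited a genuine accepting computation. *)

From HB Require Import structures.
From mathcomp Require Import all_boot all_order all_algebra.
From mathcomp Require Import zify ring lra.
From Stdlib Require Import ClassicalEpsilon.
Set Implicit Arguments. Unset Strict Implicit. Unset Printing Implicit Defensive.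
Import Order.TTheory GRing.Theory Num.Theory.
Local Open Scope ring_scope.

(** * Computations as sequences of records *)

Section TMAsCellularAutomaton.
Variables (Sigma : finType) (M : TM Sigma).

Definition cell : finType := (tm_tape M * option (tm_state M))%type.
Definition blank_cell : cell := (tm_blank M, None).
Definition tm_halting (q : tm_state M) : bool := (q == tm_acc M) || (q == tm_rej M).

Definition right_mover (l : cell) : option (tm_state M) :=
  if l.2 is Some q then
    (if tm_halting q then None else
     let: (q', _, d) := tm_delta q l.1 in if d is TMR then Some q' else None)
  else None.

Definition left_mover (r : cell) : option (tm_state M) :=
  if r.2 is Some q then
    (if tm_halting q then None else
     let: (q', _, d) := tm_delta q r.1 in if d is TML then Some q' else None)
  else None.

Definition cell_rule (l m r : cell) : cell :=
  if m.2 is Some q then (if tm_halting q then m else ((tm_delta q m.1).1.2, None))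
  else if right_mover l is Some q' then (m.1, Some q')
  else if left_mover r is Some q' then (m.1, Some q') else m.

Definition cell_at (c : tm_config M) (i : int) : cell :=
  (tmc_tape c i, if i == tmc_head c then Some (tmc_state c) else None).

Lemma cell_at_step c i :
  cell_at (tm_step c) i =
  cell_rule (cell_at c (i - 1)) (cell_at c i) (cell_at c (i + 1)).
Proof.
rewrite /tm_step /cell_rule /right_mover /left_mover /cell_at /=.
case: c => q t h /=.
case Hh: ((q == tm_acc M) || (q == tm_rej M)) => /=.
  have Hq : tm_halting q by [].
  case: (eqVneq i h) => [->|Hi] /=; first by rewrite Hq.
  by case: ifP => _ /=; rewrite ?Hq //; case: ifP => _ /=; rewrite ?Hq.
have Hq : tm_halting q = false by [].
case Hd: (tm_delta q (t h)) => [[q' b] d] /=.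
case: (eqVneq i h) => [->|Hi] /=.
  rewrite Hq Hd /=.
  by case: d {Hd} => /=; case: eqVneq => //; lia.
case: (eqVneq (i - 1) h) => [E|E] /=.
  rewrite Hq E Hd /=.
  have -> : (i + 1 == h) = false by apply/eqP; lia.
  by case: d {Hd} => /=; case: eqVneq => // ?; exfalso; lia.
case: (eqVneq (i + 1) h) => [E'|E'] /=.
  rewrite Hq E' Hd /=.
  by case: d {Hd} => /=; case: eqVneq => // ?; exfalso; lia.
by case: d {Hd} => /=; case: eqVneq => // ?; exfalso; lia.
Qed.

Fixpoint scan_rule (l : cell) (s : seq cell) : seq cell :=
  if s is m :: s' then cell_rule l m (head blank_cell s') :: scan_rule m s' else [::].

Definition next_record (r : seq cell) : seq cell := scan_rule blank_cell r.

Lemma size_scan_rule l s : size (scan_rule l s) = size s.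
Proof. by elim: s l => //= m s IH l; rewrite IH. Qed.

Definition window (lo : int) (n : nat) (c : tm_config M) : seq cell :=
  [seq cell_at c (lo + j%:Z) | j <- iota 0 n].

Lemma scan_rule_iota c lo n j :
  cell_at c (lo + (j + n)%N%:Z) = blank_cell ->
  scan_rule (cell_at c (lo + j%:Z - 1)) [seq cell_at c (lo + i%:Z) | i <- iota j n]
  = [seq cell_at (tm_step c) (lo + i%:Z) | i <- iota j n].
Proof.
elim: n j => [|n IH] j Hb //=.
have -> : head blank_cell [seq cell_at c (lo + i%:Z) | i <- iota j.+1 n]
          = cell_at c (lo + j%:Z + 1).
  case: n {IH} Hb => [|n] /= Hb; last by congr cell_at; lia.
  by rewrite -Hb; congr cell_at; lia.
rewrite cell_at_step; congr cons.
have -> : lo + j%:Z = lo + j.+1%:Z - 1 by lia.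
by apply: IH; rewrite -Hb; congr cell_at; lia.
Qed.

Lemma next_record_window c lo n :
  cell_at c (lo - 1) = blank_cell -> cell_at c (lo + n%:Z) = blank_cell ->
  next_record (window lo n c) = window lo n (tm_step c).
Proof.
move=> Hlo Hhi; rewrite /next_record /window -Hlo.
have -> : lo - 1 = lo + 0%N%:Z - 1 by lia.
by apply: scan_rule_iota; rewrite -Hhi add0n.
Qed.

Definition headless (r : seq cell) : bool := all (fun x => x.2 == None) r.

Lemma scan_rule_headless l s : l.2 = None -> headless s -> scan_rule l s = s.
Proof.
elim: s l => //= m s IH l Hl /andP [/eqP Hm Hs].
rewrite IH // /cell_rule Hm /right_mover Hl /left_mover.
by case: s {IH} Hs => //= x s /andP [/eqP -> _]; case: m Hm => ? ? /= ->.
Qed.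

Definition window_record (r : seq cell) (c : tm_config M) (lo : int) : Prop :=
  [/\ r = window lo (size r) c,
      (forall i, (i < lo) || (lo + (size r)%:Z <= i) -> tmc_tape c i = tm_blank M)
    & (lo <= tmc_head c) && (tmc_head c < lo + (size r)%:Z)].

(* Once the head has left the window, the record no longer follows the tape,
   but it stays constant and carries no state. *)
Definition tracks (r : seq cell) (c : tm_config M) (lo : int) :=
  window_record r c lo \/ headless r.

Lemma tm_step_tape (c : tm_config M) i : i != tmc_head c -> tmc_tape (tm_step c) i = tmc_tape c i.
Proof.
rewrite /tm_step; case: ifP => // _.
by case: (tm_delta _ _) => [[q b] d] /= Hi; rewrite (negbTE Hi).
Qed.

Lemma tm_step_head (c : tm_config M) :
  (tmc_head c - 1 <= tmc_head (tm_step c)) && (tmc_head (tm_step c) <= tmc_head c + 1).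
Proof.
rewrite /tm_step; case: ifP => _; first by apply/andP; split; lia.
by case: (tm_delta _ _) => [[q b] d] /=; case: d; apply/andP; split; lia.
Qed.

Lemma window_headless c lo n :
  (tmc_head c < lo) || (lo + n%:Z <= tmc_head c) -> headless (window lo n c).
Proof.
move=> H; apply/allP => x /mapP [j]; rewrite mem_iota => /andP [_ Hj] ->.
rewrite /cell_at /=; case: (eqVneq (lo + j%:Z) (tmc_head c)) => // E; exfalso.
by move: H Hj; rewrite -E; lia.
Qed.

Lemma window_record_step r c lo : window_record r c lo ->
  [/\ next_record r = window lo (size r) (tm_step c),
      (forall i, (i < lo) || (lo + (size r)%:Z <= i) -> tmc_tape (tm_step c) i = tm_blank M)
    & (lo - 1 <= tmc_head (tm_step c)) && (tmc_head (tm_step c) <= lo + (size r)%:Z)].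
Proof.
case=> Er Hout /andP [Hl Hr].
have Hs := tm_step_head c.
split.
- rewrite {1}Er; apply: next_record_window.
    rewrite /cell_at Hout; last by apply/orP; left; lia.
    by case: eqVneq => // E; exfalso; lia.
  rewrite /cell_at Hout; last by apply/orP; right; lia.
  by case: eqVneq => // E; exfalso; lia.
- by move=> i Hi; rewrite tm_step_tape ?Hout //; apply/eqP => E; move: Hi; rewrite E; lia.
- by move: Hs; lia.
Qed.

Lemma tracks_step r c lo : tracks r c lo -> tracks (next_record r) (tm_step c) lo.
Proof.
case=> [W|Hn]; last by right; rewrite /next_record scan_rule_headless.
have [E Hout Hh] := window_record_step W.
have Hsz : size (next_record r) = size r by rewrite size_scan_rule.
case: (boolP ((lo <= tmc_head (tm_step c)) && (tmc_head (tm_step c) < lo + (size r)%:Z))) => Hin.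
  by left; split; rewrite Hsz // -E.
by right; rewrite E; apply: window_headless; move: Hh Hin; lia.
Qed.

Definition is_acc_cell (x : cell) : bool := x.2 == Some (tm_acc M).

Definition has_acc (r : seq cell) : bool := has is_acc_cell r.

Lemma has_acc_rcons r x : has_acc (rcons r x) = has_acc r || is_acc_cell x.
Proof. by rewrite /has_acc has_rcons orbC. Qed.

Lemma window_record_has_acc r c lo :
  window_record r c lo -> has_acc r = (tmc_state c == tm_acc M).
Proof.
case=> Er _ Hh; rewrite Er /has_acc /window has_map.
apply/hasP/idP.
  by case=> j _; rewrite /preim /= /is_acc_cell /cell_at /=; case: ifP => //= _ /eqP [->].
move=> Hs; exists (absz (tmc_head c - lo)); first by rewrite mem_iota; move: Hh; lia.
rewrite /preim /= /is_acc_cell /cell_at /=.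
have -> : lo + (absz (tmc_head c - lo))%:Z = tmc_head c by move: Hh; lia.
by rewrite eqxx /= (eqP Hs).
Qed.

Lemma tracks_has_acc r c lo : tracks r c lo -> has_acc r -> tmc_state c = tm_acc M.
Proof.
case=> [W|Hn] Ha; first by apply/eqP; rewrite -(window_record_has_acc W).
by case/hasP: Ha => x /(allP Hn) /eqP; rewrite /is_acc_cell => ->.
Qed.

Definition input_symbol (w : seq Sigma) (j : nat) : tm_tape M :=
  if onth w j is Some a then tm_inp M a else tm_blank M.

Definition input_cells (w : seq Sigma) (n : nat) : seq cell :=
  [seq (input_symbol w j, if j == 0%N then Some (tm_start M) else None) | j <- iota 0 n].

(* The prover may pad the input on the left with [k] blanks and on the right
   up to any length [n]. *)
Definition initial_record (w : seq Sigma) (r : seq cell) : Prop :=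
  exists k n, [/\ (0 < n)%N, (size w <= n)%N & r = nseq k blank_cell ++ input_cells w n].

Lemma tm_init_tape_neg w i : i < 0 -> tmc_tape (tm_init M w) i = tm_blank M.
Proof. by case: i. Qed.

Lemma tm_init_tape_nat w (j : nat) : tmc_tape (tm_init M w) j%:Z = input_symbol w j.
Proof. by []. Qed.

Lemma initial_window_record w k n : (0 < n)%N -> (size w <= n)%N ->
  window_record (nseq k blank_cell ++ input_cells w n) (tm_init M w) (- k%:Z).
Proof.
move=> Hn Hw.
rewrite /window_record size_cat size_nseq /input_cells size_map size_iota.
split.
- rewrite /window iotaD map_cat; congr cat.
    set s := map _ (iota 0 k).
    have /all_pred1P -> : all (pred1 blank_cell) s.
      apply/allP => x /mapP [j]; rewrite mem_iota => /andP [_ Hj] ->.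
      rewrite /= /cell_at tm_init_tape_neg; last by lia.
      by apply/eqP; congr pair; case: ifP => // /eqP; rewrite /tm_init /=; lia.
    by rewrite size_map size_iota.
  have -> : iota (0 + k) n = [seq (k + i)%N | i <- iota 0 n] by rewrite add0n -iotaDl addn0.
  rewrite -map_comp; apply: eq_map => j /=.
  have -> : - k%:Z + (k + j)%N%:Z = j%:Z by lia.
  by rewrite /cell_at tm_init_tape_nat /=; congr pair; case: j.
- move=> i /orP [Hi|Hi]; first by rewrite tm_init_tape_neg //; lia.
  have [m Em] : exists m : nat, i = m%:Z by exists (absz i); lia.
  by rewrite Em tm_init_tape_nat /input_symbol onth_default //; move: Hi; rewrite Em; lia.
- by rewrite /tm_init /=; apply/andP; split; lia.
Qed.

Definition history (w : seq Sigma) (rs : seq (seq cell)) : Prop :=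
  if rs is r0 :: rest then initial_record w r0 /\ fpath next_record r0 rest else True.

Lemma fpath_tracks_acc r0 rest c lo :
  tracks r0 c lo -> fpath next_record r0 rest -> has_acc (last r0 rest) ->
  exists n, tmc_state (iter n (@tm_step _ M) c) = tm_acc M.
Proof.
elim: rest r0 c => [|r1 rest IH] r0 c T /=.
  by move=> _ Ha; exists 0%N; apply: tracks_has_acc T Ha.
case/andP => /eqP E Hp Ha.
have T' : tracks r1 (tm_step c) lo by rewrite -E; apply: tracks_step.
have [n Hn] := IH _ _ T' Hp Ha.
by exists n.+1; rewrite iterSr.
Qed.

Lemma history_accepts w rs :
  history w rs -> rs != [::] -> has_acc (last [::] rs) -> tm_accepts M w.
Proof.
case: rs => // r0 rest /= [[k [n [Hn Hw ->]]] Hp] _ Ha.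
exact: (fpath_tracks_acc (or_introl (initial_window_record k Hn Hw)) Hp Ha).
Qed.

Lemma tm_head_bound w (i : nat) :
  (- i%:Z <= tmc_head (iter i (@tm_step _ M) (tm_init M w))) &&
  (tmc_head (iter i (@tm_step _ M) (tm_init M w)) <= i%:Z).
Proof.
elim: i => [|i IH] //=.
by have := tm_step_head (iter i (@tm_step _ M) (tm_init M w)); move: IH; lia.
Qed.

(* Padding by [m + 1] cells on each side keeps the head inside the window
   during the first [m] steps. *)
Lemma accepting_history_exists w : tm_accepts M w ->
  exists r0 m, initial_record w r0 /\ has_acc (iter m next_record r0).
Proof.
case=> m Hm.
pose r0 := nseq m.+1 blank_cell ++ input_cells w (maxn 1 (size w) + m).
have Hn : (0 < maxn 1 (size w) + m)%N by lia.
have Hw : (size w <= maxn 1 (size w) + m)%N by lia.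
have Hsz : size r0 = (m.+1 + (maxn 1 (size w) + m))%N.
  by rewrite size_cat size_nseq size_map size_iota.
have Wi i : (i <= m)%N ->
    window_record (iter i next_record r0) (iter i (@tm_step _ M) (tm_init M w)) (- m.+1%:Z).
  elim: i => [|i IH] Hi; first exact: initial_window_record.
  have [E Hout Hh] := window_record_step (IH (ltnW Hi)).
  have Hs : size (iter i next_record r0) = size r0.
    by elim: (i) => //= j IHj; rewrite size_scan_rule IHj.
  split; rewrite /= size_scan_rule //.
  by have := tm_head_bound w i.+1; rewrite /= Hs Hsz; move: Hi; lia.
exists r0, m; split; first by exists m.+1, (maxn 1 (size w) + m)%N.
by rewrite (window_record_has_acc (Wi m (leqnn m))) Hm.
Qed.

End TMAsCellularAutomaton.

Arguments next_record {Sigma M}.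
Arguments has_acc {Sigma M}.

(** * Integer codes and three-state affine registers *)

Section Code.
Variable T : finType.

Definition code_base : nat := #|T|.+1.

(* Digits are nonzero, so that the code of a sequence also determines its length. *)
Definition digit (x : T) : nat := (enum_rank x).+1.

Definition code (s : seq T) : nat := foldl (fun n x => n * code_base + digit x)%N 0%N s.

Lemma code_rcons s x : code (rcons s x) = (code s * code_base + digit x)%N.
Proof. by rewrite /code foldl_rcons. Qed.

Lemma digit_bounds x : (0 < digit x < code_base)%N.
Proof. by rewrite /digit /code_base ltnS; apply/andP; split => //; apply: ltn_ord. Qed.

Lemma code_inj : injective code.
Proof.
elim/last_ind=> [|s1 x1 IH] s2; case/lastP: s2 => [|s2 x2] //.
- by rewrite code_rcons (_ : code [::] = 0%N) //; have := digit_bounds x2; lia.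
- by rewrite code_rcons (_ : code [::] = 0%N) //; have := digit_bounds x1; lia.
rewrite !code_rcons => E.
have Ed : digit x1 = digit x2.
  have := congr1 (modn^~ code_base) E.
  by rewrite !modnMDl !modn_small //; [case/andP: (digit_bounds x2)|case/andP: (digit_bounds x1)].
have Es : code s1 = code s2.
  by move: E; rewrite Ed => /eqP; rewrite eqn_add2r eqn_mul2r => /orP [/eqP|/eqP].
rewrite (IH _ Es); congr rcons.
by apply: enum_rank_inj; apply: val_inj; case: Ed.
Qed.

End Code.

Definition col3 (x y z : rat) : 'cV[rat]_3 := \col_(i < 3) nth 0 [:: x; y; z] i.

Definition mx3 (rows : seq (seq rat)) : 'M[rat]_3 :=
  \matrix_(i < 3, j < 3) nth 0 (nth [::] rows i) j.

Lemma mx3_mul a b c d e f g h k x y z :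
  mx3 [:: [:: a; b; c]; [:: d; e; f]; [:: g; h; k]] *m col3 x y z =
  col3 (a * x + b * y + c * z) (d * x + e * y + f * z) (g * x + h * y + k * z).
Proof.
apply/matrixP => i j; rewrite !mxE !big_ord_recl big_ord0 !mxE /=.
by case: i => [[|[|[|n]]] Hi] /=; [ring|ring|ring|move: Hi].
Qed.

Lemma mx3_affine a b c d e f g h k :
  a + d + g = 1 -> b + e + h = 1 -> c + f + k = 1 ->
  affine_op (mx3 [:: [:: a; b; c]; [:: d; e; f]; [:: g; h; k]]).
Proof.
move=> H1 H2 H3 j; rewrite !big_ord_recl big_ord0 !mxE /= addr0.
by case: j => [[|[|[|n]]] Hj] /=; rewrite ?addrA //; move: Hj.
Qed.

Definition affv (x y : rat) : 'cV[rat]_3 := col3 x y (1 - x - y).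

Lemma affine_vec_affv x y : affine_vec (affv x y).
Proof. by rewrite /affine_vec !big_ord_recl big_ord0 !mxE /=; ring. Qed.

Lemma delta_mx_last : delta_mx (inord 2 : 'I_3) (ord0 : 'I_1) = affv 0 0.
Proof.
apply/matrixP => i j; rewrite !mxE /= (ord1 j) eqxx andbT.
have -> : (i == inord 2) = (val i == 2%N) by rewrite -(inj_eq val_inj) /= inordK.
by case: i => [[|[|[|?]]] ?] //=; rewrite subr0.
Qed.

Lemma affine_op_id : affine_op (1%:M : 'M[rat]_3).
Proof.
by move=> j; rewrite (bigD1 j) //= mxE eqxx big1 ?addr0 // => i /negbTE; rewrite mxE => ->.
Qed.

Section RegisterOps.
Variable b : nat.

(* The third coordinate absorbs the changes, which keeps the columns summing to 1. *)
Definition push_x (d : rat) : 'M[rat]_3 :=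
  mx3 [:: [:: b%:R + d; d; d]; [:: 0; 1; 0]; [:: 1 - b%:R - d; - d; 1 - d]].

Definition push_y (d : rat) : 'M[rat]_3 :=
  mx3 [:: [:: 1; 0; 0]; [:: d; b%:R + d; d]; [:: - d; 1 - b%:R - d; 1 - d]].

Lemma push_x_affv d x y : push_x d *m affv x y = affv (b%:R * x + d) y.
Proof. by rewrite /push_x /affv mx3_mul; congr col3; ring. Qed.

Lemma push_y_affv d x y : push_y d *m affv x y = affv x (b%:R * y + d).
Proof. by rewrite /push_y /affv mx3_mul; congr col3; ring. Qed.

Lemma affine_op_push_x d : affine_op (push_x d).
Proof. by apply: mx3_affine; ring. Qed.

Lemma affine_op_push_y d : affine_op (push_y d).
Proof. by apply: mx3_affine; ring. Qed.

End RegisterOps.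

Section Compare.
Variable K : rat.

Definition compare_op : 'M[rat]_3 := mx3 [:: [:: K; - K; 0]; [:: - K; K; 0]; [:: 1; 1; 1]].

Definition compare_vec (x y : rat) : 'cV[rat]_3 := col3 (K * (x - y)) (- (K * (x - y))) 1.

Lemma compare_op_affv x y : compare_op *m affv x y = compare_vec x y.
Proof. by rewrite /compare_op /compare_vec /affv mx3_mul; congr col3; ring. Qed.

Lemma affine_op_compare : affine_op compare_op.
Proof. by apply: mx3_affine; ring. Qed.

Definition pass_prob (x y : rat) : rat := 1 / (2 * `|K * (x - y)| + 1).

Lemma weigh_compare_vec x y :
  `|compare_vec x y (inord 2) ord0| / l1norm (compare_vec x y) = pass_prob x y.
Proof.
rewrite /l1norm !big_ord_recl big_ord0 !mxE inordK //= normrN normr1 addr0.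
by rewrite /pass_prob addrA -mulr2n mulr_natl.
Qed.

Lemma pass_prob_bounds x y : 0 <= pass_prob x y <= 1.
Proof.
have Hd : 0 <= 2 * `|K * (x - y)| by rewrite mulr_ge0.
rewrite /pass_prob divr_ge0 ?addr_ge0 //= ler_pdivrMr ?mul1r ?lerDr //.
by rewrite ltr_wpDl.
Qed.

Lemma pass_prob_eq x : pass_prob x x = 1.
Proof. by rewrite /pass_prob subrr mulr0 normr0 mulr0 add0r divr1. Qed.

End Compare.

(* Distinct integers are at distance at least 1, so with [K = 1 / eps] the
   test passes with probability at most [1 / (2 / eps + 1) <= eps]. *)
Lemma pass_prob_neq (eps : rat) (x y : nat) : 0 < eps -> x <> y ->
  pass_prob eps^-1 x%:R y%:R <= eps.
Proof.
move=> Heps Hxy; have HK : 0 < eps^-1 by rewrite invr_gt0.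
rewrite /pass_prob ler_pdivrMr; last by rewrite ltr_wpDl ?mulr_ge0.
have H1 : 1 <= `|(x%:R - y%:R : rat)|.
  have -> : x%:R - y%:R = ((x%:Z - y%:Z) : int)%:~R :> rat by rewrite rmorphB.
  rewrite -intr_norm ler1z -gtz0_ge1 normr_gt0 subr_eq0.
  by apply/eqP => -[].
rewrite normrM (gtr0_norm HK) mulrDr mulr1 mulrA mulrA.
have -> : eps * 2 * eps^-1 = 2 by rewrite mulrAC mulfV ?gt_eqF // mul1r.
by move: H1 Heps; set t := `|_|; lra.
Qed.

(** * The verifier *)

Section OnlineScan.
Variables (Sigma : finType) (M : TM Sigma).

Local Notation cell := (cell M).
Local Notation blank_cell := (blank_cell M).

Definition shift (p2 : cell) (p1 : option cell) (c : cell) : cell * option cell :=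
  if p1 is Some m then (m, Some c) else (p2, Some c).

(* Online computation of [next_record]: a state [(p2, p1, out)] holds the
   last two cells read and the successor cells already produced. *)
Definition scan_step (st : cell * option cell * seq cell) (c : cell) :=
  let: (p2, p1, out) := st in
  if p1 is Some m then (m, Some c, rcons out (cell_rule p2 m c)) else (p2, Some c, out).

Definition scan_state (s : seq cell) := foldl scan_step (blank_cell, None, [::]) s.

Definition scan_flush (p2 : cell) (p1 : option cell) : seq cell :=
  if p1 is Some m then [:: cell_rule p2 m blank_cell] else [::].

Lemma scan_state_rcons s c : scan_state (rcons s c) = scan_step (scan_state s) c.
Proof. by rewrite /scan_state foldl_rcons. Qed.

Lemma foldl_scan_step l m out s :
  let st := foldl scan_step (l, Some m, out) s in
  st.2 ++ scan_flush st.1.1 st.1.2 = out ++ scan_rule l (m :: s).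
Proof. by elim: s l m out => [|c s IH] l m out //=; rewrite IH /= cat_rcons. Qed.

Lemma scan_state_flush s :
  (scan_state s).2 ++ scan_flush (scan_state s).1.1 (scan_state s).1.2 = next_record s.
Proof. by case: s => [|c s] //; exact: (foldl_scan_step blank_cell c [::] s). Qed.

Lemma scan_state_shift p2 p1 s c : (p2, p1) = (scan_state s).1 ->
  shift p2 p1 c = (scan_state (rcons s c)).1.
Proof.
by rewrite scan_state_rcons; case: (scan_state s) => [[a b] e] /= [-> ->]; case: b.
Qed.

End OnlineScan.

(* [VFirst seen p2 p1 acc] reads the initial record, [VRead par p2 p1 acc] a
   later one.  The cells [p2], [p1] are read but not yet fed to the local rule,
   [seen] tells whether the head cell was read and [acc] whether an accepting
   cell was.  Register [par] accumulates the code of the successor of the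
   current record; the other one holds the code of the successor of the
   previous record and accumulates the code of the current record, until
   [VTest] weighs it. *)
Inductive vstate (T : Type) :=
 | VStart
 | VFirst of bool & T & option T & bool
 | VRead of bool & T & option T & bool
 | VTest of bool & bool
 | VAcc
 | VRej.
Arguments VStart {T}. Arguments VAcc {T}. Arguments VRej {T}.

Definition vstate_code (T : Type) :=
  (unit + (bool * T * option T * bool) + (bool * T * option T * bool) + (bool * bool) + bool)%type.

Definition vstate_encode T (s : vstate T) : vstate_code T :=
  match s with
  | VStart => inl (inl (inl (inl tt)))
  | VFirst a b c d => inl (inl (inl (inr (a, b, c, d))))
  | VRead a b c d => inl (inl (inr (a, b, c, d)))
  | VTest a b => inl (inr (a, b))
  | VAcc => inr true
  | VRej => inr false
  end.

Definition vstate_decode T (x : vstate_code T) : vstate T :=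
  match x with
  | inl (inl (inl (inl _))) => VStart
  | inl (inl (inl (inr (a, b, c, d)))) => VFirst a b c d
  | inl (inl (inr (a, b, c, d))) => VRead a b c d
  | inl (inr (a, b)) => VTest _ a b
  | inr true => VAcc
  | inr false => VRej
  end.

Lemma vstate_encodeK T : cancel (@vstate_encode T) (@vstate_decode T).
Proof. by case. Qed.

HB.instance Definition _ (T : finType) :=
  Finite.copy (vstate T) (can_type (@vstate_encodeK T)).

Inductive reg_op := OpId | OpPushX of nat | OpPushY of nat | OpCompare | OpWeigh.

Section Verifier.
Variables (Sigma : finType) (M : TM Sigma) (K : rat).

Local Notation cell := (cell M).
Local Notation blank_cell := (blank_cell M).
Local Notation base := (code_base cell).

Definition reg_action (o : reg_op) : raction 3 :=
  match o with
  | OpId => Apply 1%:M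
  | OpPushX d => Apply (push_x base d%:R)
  | OpPushY d => Apply (push_y base d%:R)
  | OpCompare => Apply (compare_op K)
  | OpWeigh => Weigh
  end.

Lemma reg_action_affine o :
  match reg_action o with Apply A => affine_op A | Weigh => True end.
Proof.
case: o => [|d|d||] //=.
- exact: affine_op_id.
- exact: affine_op_push_x.
- exact: affine_op_push_y.
- exact: affine_op_compare.
Qed.

Definition tape_cell (a : tsym Sigma) : tm_tape M :=
  if a is Sym x then tm_inp M x else tm_blank M.

Definition is_rend (a : tsym Sigma) : bool := if a is REnd then true else false.

Definition emit_op (p2 : cell) (p1 : option cell) (c : cell) : reg_op :=
  if p1 is Some m then OpPushX (digit (cell_rule p2 m c)) else OpId.

(* The end of a record is read as a blank right neighbour of its last cell. *)
Definition reg_ops (q : vstate cell) (a : tsym Sigma) (g : option cell) (r : bool) : reg_op :=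
  match q with
  | VFirst _ p2 p1 _ => if r then OpId else emit_op p2 p1 (odflt blank_cell g)
  | VRead par p2 p1 _ =>
      if r == par then emit_op p2 p1 (odflt blank_cell g)
      else if g is Some c then OpPushY (digit c) else OpCompare
  | VTest par _ => if r == par then OpWeigh else OpId
  | _ => OpId
  end.

(* Written so as to be convertible to [outcome verifier]. *)
Definition voutcome : finType := {dffun forall r : bool, option 'I_((fun _ : bool => 3%N) r)}.

Definition expected_outcome (q : vstate cell) (a : tsym Sigma) (g : option cell) : voutcome :=
  [ffun r => if reg_ops q a g r is OpWeigh then Some (inord 2) else None].

(* The first record must be: blanks, the head cell in the start state, one
   cell per further input symbol (the tape head advancing with them), possibly
   blanks, and it must end (message [None]) on the right end-marker. *)
Definition control (q : vstate cell) (a : tsym Sigma) (g : option cell) : vstate cell * hmove :=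
  match q with
  | VStart => (VFirst false blank_cell None false, MoveR)
  | VFirst seen p2 p1 acc =>
      match g with
      | Some c =>
          let acc' := acc || is_acc_cell c in
          let p := shift p2 p1 c in
          if ~~ seen then
            (if c == blank_cell then (VFirst false p.1 p.2 acc', MoveS)
             else if c == (tape_cell a, Some (tm_start M)) then (VFirst true p.1 p.2 acc', MoveR)
             else (VRej, MoveS))
          else if c == (tape_cell a, None) then (VFirst true p.1 p.2 acc', MoveR)
          else (VRej, MoveS)
      | None =>
          if seen && is_rend a
          then ((if acc then VAcc else VRead true blank_cell None false), MoveS)
          else (VRej, MoveS)
      end
  | VRead par p2 p1 acc =>
      match g with
      | Some c => let p := shift p2 p1 c in (VRead par p.1 p.2 (acc || is_acc_cell c), MoveS)
      | None => (VTest _ (~~ par) acc, MoveS)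
      end
  | VTest par acc => ((if acc then VAcc else VRead par blank_cell None false), MoveS)
  | VAcc => (VAcc, MoveS)
  | VRej => (VRej, MoveS)
  end.

Definition vnext (q : vstate cell) (a : tsym Sigma) (g : option cell) (o : voutcome) :
    vstate cell * hmove :=
  if o == expected_outcome q a g then control q a g else (VRej, MoveS).

Definition verifier : Verifier Sigma := {|
  v_state := vstate cell;
  v_comm := option cell;
  v_reg := bool;
  v_dim := fun _ => 3%N;
  v_init_reg := fun _ => affv 0 0;
  v_start := VStart;
  v_acc := fun q => q == VAcc;
  v_rej := fun q => q == VRej;
  v_act := fun q a g r => reg_action (reg_ops q a g r);
  v_next := vnext |}.

Lemma verifier_wf : wf_verifier verifier.
Proof.
split; first by move=> r; apply: affine_vec_affv.
split; first by move=> q a g r; apply: reg_action_affine.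
by case.
Qed.

End Verifier.

(** * Verifiers rejecting every unexpected outcome *)

Section ExpectedBranch.
Variables (Sigma : finType) (V : Verifier Sigma).
Variable expected : v_state V -> tsym Sigma -> v_comm V -> outcome V.
Hypothesis unexpected_rejects :
  forall q a g o, o != expected q a g -> v_rej V (v_next V q a g o).1.
Hypothesis acc_rej_disjoint : forall q, ~~ (v_acc V q && v_rej V q).
Variables (P : prover V) (w : seq Sigma).

Definition child (c : vconfig V) (o : outcome V) : vconfig V :=
  let a := tape_at w (cf_head c) in
  let g := P w (cf_hist c) in
  let acts := v_act V (cf_state c) a g in
  let: (q', m) := v_next V (cf_state c) a g o in
  VConfig q' (move_head w (cf_head c) m)
    (fun r => upd_reg (acts r) (o r) (cf_regs c r))
    (rcons (cf_hist c) (cf_state c, cf_head c, g, o)).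

Lemma childE c o :
  let a := tape_at w (cf_head c) in
  let g := P w (cf_hist c) in
  child c o =
  VConfig (v_next V (cf_state c) a g o).1
    (move_head w (cf_head c) (v_next V (cf_state c) a g o).2)
    (fun r => upd_reg (v_act V (cf_state c) a g r) (o r) (cf_regs c r))
    (rcons (cf_hist c) (cf_state c, cf_head c, g, o)).
Proof. by rewrite /child; case: (v_next _ _ _ _ _). Qed.

Definition outcome_prob (c : vconfig V) (o : outcome V) : rat :=
  out_prob (v_act V (cf_state c) (tape_at w (cf_head c)) (P w (cf_hist c))) (cf_regs c) o.

Definition expected_at (c : vconfig V) : outcome V :=
  expected (cf_state c) (tape_at w (cf_head c)) (P w (cf_hist c)).

Definition expected_step (b : vconfig V * rat) : vconfig V * rat :=
  let: (c, p) := b in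
  if halted (cf_state c) then (c, p)
  else (child c (expected_at c), p * outcome_prob c (expected_at c)).

Definition expected_branch (t : nat) := iter t expected_step (vinit V, 1).

Lemma branch_step_running c p : ~~ halted (cf_state c) ->
  branch_step P w (c, p) = [seq (child c o, p * outcome_prob c o) | o <- enum (outcome V)].
Proof. by move=> H; rewrite /branch_step (negbTE H). Qed.

Definition rejecting (b : vconfig V * rat) : bool := v_rej V (cf_state b.1).

Lemma branch_step_rejecting b : rejecting b -> branch_step P w b = [:: b].
Proof. by case: b => c p; rewrite /rejecting /branch_step /halted /= => ->; rewrite orbT. Qed.

Lemma flatten_branch_step_rejecting s :
  all rejecting s -> flatten [seq branch_step P w b | b <- s] = s.
Proof. by elim: s => //= b s IH /andP [Hb Hs]; rewrite branch_step_rejecting // IH. Qed.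

Lemma branch_step_expected c p : ~~ halted (cf_state c) ->
  exists s1 s2,
    branch_step P w (c, p) = s1 ++ expected_step (c, p) :: s2 /\ all rejecting (s1 ++ s2).
Proof.
move=> Hh; rewrite branch_step_running // /expected_step (negbTE Hh).
have Hin : expected_at c \in enum (outcome V) by rewrite mem_enum.
have Hu := enum_uniq (outcome V).
case/splitPr: Hin Hu => e1 e2 Hu.
exists [seq (child c o, p * outcome_prob c o) | o <- e1].
exists [seq (child c o, p * outcome_prob c o) | o <- e2].
split; first by rewrite map_cat.
have Hx : expected_at c \notin e1 ++ e2.
  by move: Hu; rewrite uniq_catC /= => /andP [H _]; rewrite mem_cat orbC -mem_cat.
rewrite -map_cat all_map; apply/allP => o Ho /=.
have Hne : o != expected_at c by apply/eqP => Eo; rewrite -Eo Ho in Hx.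
by rewrite /rejecting childE; apply: unexpected_rejects.
Qed.

Lemma vdist_expected_branch t : exists s1 s2,
  vdist P w t = s1 ++ expected_branch t :: s2 /\ all rejecting (s1 ++ s2).
Proof.
elim: t => [|t [s1 [s2 [E Hr]]]]; first by exists [::], [::].
move: (Hr); rewrite all_cat => /andP [Hr1 Hr2].
rewrite /vdist /expected_branch !iterS -/(vdist P w t) -/(expected_branch t).
rewrite E map_cat flatten_cat /= !flatten_branch_step_rejecting //.
case: (expected_branch t) => c p.
case: (boolP (halted (cf_state c))) => Hh.
  by exists s1, s2; rewrite /branch_step /expected_step Hh.
have [e1 [e2 [-> He]]] := branch_step_expected p Hh.
exists (s1 ++ e1), (e2 ++ s2); split; first by rewrite -!catA.
by move: He; rewrite !all_cat Hr1 Hr2 /= andbT.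
Qed.

Lemma acc_prob_by_expected t :
  acc_prob_by P w t =
  if v_acc V (cf_state (expected_branch t).1) then (expected_branch t).2 else 0.
Proof.
have [s1 [s2 [E Hr]]] := vdist_expected_branch t.
have sum_rejecting s : all rejecting s -> \sum_(b <- s | v_acc V (cf_state b.1)) b.2 = 0.
  elim: s => [|b s IH] /=; first by rewrite big_nil.
  case/andP => Hb Hs; rewrite big_cons IH //; case: ifP => Ha //.
  by move: Hb (acc_rej_disjoint (cf_state b.1)); rewrite /rejecting Ha => ->.
move: Hr; rewrite all_cat => /andP [Hr1 Hr2].
by rewrite /acc_prob_by E big_cat big_cons /= !sum_rejecting // add0r addr0.
Qed.

End ExpectedBranch.

(** * Soundness *)

Section Ghost.
Variables (Sigma : finType) (M : TM Sigma) (K : rat) (w : seq Sigma).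

Local Notation cell := (cell M).
Local Notation blank_cell := (blank_cell M).

(* The run of the verifier along the expected outcomes: the control state and
   head, the records read so far, the record being read, and whether every
   record passed the comparison with the successor of its predecessor. *)
Record ghost := Ghost {
  gstate : vstate cell;
  ghead : nat;
  grecords : seq (seq cell);
  gcur : seq cell;
  gok : bool
}.

Definition ghost_init : ghost := Ghost VStart 0 [::] [::] true.

Definition ghost_halted (q : vstate cell) : bool := (q == VAcc) || (q == VRej).

Definition ghost_step (G : ghost) (g : option cell) : ghost :=
  let nx := control (gstate G) (tape_at w (ghead G)) g in
  Ghost nx.1 (move_head w (ghead G) nx.2)
    (match gstate G, g with
     | VFirst _ _ _ _, None => [:: gcur G]
     | VTest _ _, _ => rcons (grecords G) (gcur G)
     | _, _ => grecords G end)
    (match gstate G, g with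
     | VFirst _ _ _ _, Some c | VRead _ _ _ _, Some c => rcons (gcur G) c
     | VFirst _ _ _ _, None | VTest _ _, _ => [::]
     | _, _ => gcur G end)
    (if gstate G is VTest _ _ then gok G && (gcur G == next_record (last [::] (grecords G)))
     else gok G).

Definition ghost_regs (G : ghost) (r : bool) : 'cV[rat]_3 :=
  let succ_prev := (code (next_record (last [::] (grecords G))))%:R in
  match gstate G with
  | VFirst _ _ _ _ => if r then affv 0 0 else affv (code (scan_state (gcur G)).2)%:R 0
  | VRead par _ _ _ =>
      if r == par then affv (code (scan_state (gcur G)).2)%:R 0
      else affv succ_prev (code (gcur G))%:R
  | VTest par _ =>
      if r == par then compare_vec K succ_prev (code (gcur G))%:R
      else affv (code (next_record (gcur G)))%:R 0
  | _ => affv 0 0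
  end.

Definition ghost_inv (G : ghost) : Prop :=
  let: Ghost q hd rs cur ok := G in
  match q with
  | VStart => [/\ hd = 0%N, rs = [::], cur = [::] & ok]
  | VFirst seen p2 p1 acc =>
      [/\ rs = [::], ok, (p2, p1) = (scan_state cur).1, acc = has_acc cur &
        if seen then exists k n, [/\ (0 < n)%N, cur = nseq k blank_cell ++ input_cells M w n
                                   & hd = minn n.+1 (size w).+1]
        else exists k, cur = nseq k blank_cell /\ hd = 1%N]
  | VRead _ p2 p1 acc =>
      [/\ rs != [::], (p2, p1) = (scan_state cur).1, acc = has_acc cur & ok -> history w rs]
  | VTest _ acc => [/\ rs != [::], acc = has_acc cur & ok -> history w rs]
  | VAcc => ok -> [/\ history w rs, rs != [::] & has_acc (last [::] rs)]
  | VRej => True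
  end.

Lemma ghost_inv_init : ghost_inv ghost_init.
Proof. by []. Qed.

Lemma tape_cell_at n : tape_cell M (tape_at w (minn n.+1 (size w).+1)) = input_symbol M w n.
Proof.
rewrite /tape_at /input_symbol /tape_cell.
case: (leqP (size w) n) => H.
  have -> : minn n.+1 (size w).+1 = (size w).+1 by lia.
  by rewrite /= (onth_default (leqnn _)) onth_default.
have -> : minn n.+1 (size w).+1 = n.+1 by lia.
by rewrite /=; case: (onth w n).
Qed.

Lemma is_rend_at n : is_rend (tape_at w (minn n.+1 (size w).+1)) = (size w <= n)%N.
Proof.
rewrite /tape_at /is_rend.
case: (leqP (size w) n) => H.
  have -> : minn n.+1 (size w).+1 = (size w).+1 by lia.
  by rewrite /= (onth_default (leqnn _)).
have -> : minn n.+1 (size w).+1 = n.+1 by lia.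
rewrite /=; case E: (onth w n) => [a|] //.
by have := onthNE w n; rewrite E /=; lia.
Qed.

Lemma input_cellsS n : (0 < n)%N ->
  input_cells M w n.+1 = rcons (input_cells M w n) (input_symbol M w n, None).
Proof. by move=> Hn; rewrite /input_cells -addn1 iotaD map_cat cats1 /=; case: n Hn. Qed.

Lemma history_rcons (rs : seq (seq cell)) r :
  rs != [::] -> history w rs -> r = next_record (last [::] rs) -> history w (rcons rs r).
Proof.
case: rs => // r0 rest _ /= [V Hp] Hr; split => //.
by rewrite rcons_path Hp /= Hr eqxx.
Qed.

Lemma ghost_inv_first_cell seen p2 p1 acc hd rs cur ok c :
  ghost_inv (Ghost (VFirst seen p2 p1 acc) hd rs cur ok) ->
  ghost_inv (ghost_step (Ghost (VFirst seen p2 p1 acc) hd rs cur ok) (Some c)).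
Proof.
case=> -> -> Hp Ha Hs; rewrite /ghost_step /=.
have Hsh := scan_state_shift c Hp.
have Ha' : acc || is_acc_cell c = has_acc (rcons cur c) by rewrite has_acc_rcons Ha.
case: seen Hs => [[k [n [Hn Hc Hh]]]|[k [Hc Hh]]] /=.
  case: eqP => [Ec|_] //=; split => //; first by case: (shift _ _ _) Hsh.
  exists k, n.+1; split => //; first by rewrite input_cellsS // -rcons_cat Ec Hc Hh tape_cell_at.
  by rewrite /move_head Hh; lia.
case: eqP => [Ec|_] /=.
  split => //; first by case: (shift _ _ _) Hsh.
  by exists k.+1; rewrite Hc Ec; split => //; elim: (k) => //= j ->.
case: eqP => [Ec|_] //=; split => //; first by case: (shift _ _ _) Hsh.
exists k, 1%N; split => //; last by rewrite Hh /move_head; lia.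
rewrite Hc Ec Hh cats1; congr rcons.
by rewrite /tape_cell /tape_at /input_symbol /=; case: (w).
Qed.

Lemma ghost_inv_step G g : ghost_inv G -> ~~ ghost_halted (gstate G) ->
  ghost_inv (ghost_step G g).
Proof.
case: G => [[|seen p2 p1 acc|par p2 p1 acc|par acc| |] hd rs cur ok] //= HI _.
- case: HI => -> -> -> Hok; split => //; exists 0%N; split => //.
  by rewrite /move_head; lia.
- case: g => [c|]; first exact: ghost_inv_first_cell.
  case: HI => _ -> Hp Ha; case: seen => [[k [n [Hn Hc Hh]]]|//] /=.
  rewrite /ghost_step /= Hh is_rend_at; case: ifP => // Hw.
  by case: acc Ha => Ha /=; split => //=; split => //; exists k, n.
- case: HI => Hrs Hp Ha Hc; case: g => [c|] /=; last by split.
  split => //; first by case: (shift _ _ _) (scan_state_shift c Hp).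
  by rewrite has_acc_rcons Ha.
- case: HI => Hrs Ha Hc.
  have Hh : ok && (cur == next_record (last [::] rs)) -> history w (rcons rs cur).
    by case/andP => /Hc Hh /eqP E; apply: history_rcons.
  have Hrs' : rcons rs cur != [::] by case: (rs).
  case: acc Ha => Ha /=; last by split.
  by move=> /Hh Hhist; split; rewrite ?last_rcons -?Ha.
Qed.


Local Notation act := (reg_action M K).

Lemma emit_op_scan (cur : seq cell) p2 p1 c o : (p2, p1) = (scan_state cur).1 ->
  upd_reg (act (emit_op p2 p1 c)) o (affv (code (scan_state cur).2)%:R 0) =
  affv (code (scan_step (scan_state cur) c).2)%:R 0.
Proof.
case: (scan_state cur) => [[a b] e] /= [-> ->].
case: b => [m|] /=; last by rewrite mul1mx.
by rewrite push_x_affv code_rcons natrD natrM mulrC.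
Qed.

Lemma emit_op_flush (cur : seq cell) p2 p1 o : (p2, p1) = (scan_state cur).1 ->
  upd_reg (act (emit_op p2 p1 blank_cell)) o (affv (code (scan_state cur).2)%:R 0) =
  affv (code (next_record cur))%:R 0.
Proof.
move=> Hp; rewrite emit_op_scan // -scan_state_flush.
by case: (scan_state cur) Hp => [[a [m|]] e] /= _; rewrite ?cats1 ?cats0.
Qed.

Lemma push_y_digit x (cur : seq cell) c o :
  upd_reg (act (OpPushY (digit c))) o (affv x (code cur)%:R) = affv x (code (rcons cur c))%:R.
Proof. by rewrite /= push_y_affv code_rcons natrD natrM mulrC. Qed.

Lemma ghost_regs_step G g r :
  ghost_inv G -> ~~ ghost_halted (gstate G) -> ~~ ghost_halted (gstate (ghost_step G g)) ->
  upd_reg (act (reg_ops (gstate G) (tape_at w (ghead G)) g r))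
    (expected_outcome (gstate G) (tape_at w (ghead G)) g r) (ghost_regs G r) =
  ghost_regs (ghost_step G g) r.
Proof.
rewrite /ghost_step /ghost_regs.
case: G => [[|seen p2 p1 acc|par p2 p1 acc|par acc| |] hd rs cur ok] //= HI _.
- by case: HI => _ _ -> _; rewrite mul1mx; case: r.
- case: HI => _ _ Hp _ Hs; case: g => [c|] /=.
    set nx := (if ~~ seen then _ else _).
    have [->|[s' ->]] // : nx.1 = VRej \/ exists s',
        nx.1 = VFirst s' (shift p2 p1 c).1 (shift p2 p1 c).2 (acc || is_acc_cell c).
      by rewrite /nx; clear; case: seen => /=; repeat case: ifP => _; by [left|right; eexists].
    by case: r => _; [rewrite /= mul1mx|rewrite emit_op_scan // scan_state_rcons].
  case: seen Hs => //= _; case: ifP => // _; case: acc => //= _.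
  by case: r => /=; rewrite ?mul1mx ?emit_op_flush.
- case: HI => _ Hp _ _; case: g => [c|] /= _.
    by case: eqP => [->|_]; rewrite ?emit_op_scan ?scan_state_rcons ?push_y_digit.
  case: eqP => [->|/eqP Hr].
    by rewrite (_ : (par == ~~ par) = false) ?emit_op_flush //; case: (par).
  by rewrite (_ : r == ~~ par) /= ?compare_op_affv //; move: Hr; case: (r); case: (par).
- case: acc HI => //= _ _.
  case: eqP => [->|_]; rewrite ffunE /= ?eqxx /= ?delta_mx_last //.
  by rewrite mul1mx last_rcons.
Qed.

End Ghost.

Section Soundness.
Variables (Sigma : finType) (M : TM Sigma) (eps : rat).
Hypothesis eps_gt0 : 0 < eps.

Local Notation V := (verifier M eps^-1).

Definition verifier_expected : v_state V -> tsym Sigma -> v_comm V -> outcome V :=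
  @expected_outcome Sigma M.

Lemma verifier_unexpected_rejects q a g o :
  o != verifier_expected q a g -> v_rej V (v_next V q a g o).1.
Proof. by move=> H; rewrite /= /vnext (negbTE H). Qed.

Lemma verifier_acc_rej q : ~~ (v_acc V q && v_rej V q).
Proof. by case: q. Qed.

Lemma expected_outcome_prob q a g (regs : forall r : bool, 'cV[rat]_3) :
  out_prob (V := V) (fun r => v_act V q a g r) regs (verifier_expected q a g) =
  if q is VTest par _ then `|regs par (inord 2) ord0| / l1norm (regs par) else 1.
Proof.
rewrite /out_prob /= big_bool !ffunE.
case: q => [|s p2 p1 acc|par p2 p1 acc|[] acc||] /=; rewrite ?mulr1 ?mul1r //.
- by case: s; case: p1.
- by case: par; case: p1; case: g.
Qed.

Variables (w : seq Sigma) (P : prover V).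

Local Notation ghost := (ghost M).
Local Notation expected_at := (expected_at verifier_expected P w).

Definition coupled_step (x : vconfig V * rat * ghost) : vconfig V * rat * ghost :=
  let: (c, p, G) := x in
  if halted (cf_state c) then x
  else let o := expected_at c in
       (child P w c o, p * outcome_prob P w c o, ghost_step w G (P w (cf_hist c))).

Definition coupled_run (t : nat) := iter t coupled_step (vinit V, 1, ghost_init M).

Lemma coupled_run_fst t : (coupled_run t).1 = expected_branch verifier_expected P w t.
Proof.
elim: t => //= t IH; rewrite -IH.
by case: (coupled_run t) => [[c p] G] /=; case: ifP.
Qed.

(* The expected branch follows the ghost run; its probability stays 1 as long
   as every comparison was between equal records, and drops to at most [eps]
   at the first comparison between distinct ones. *)
Definition coupled (x : vconfig V * rat * ghost) : Prop :=
  let: (c, p, G) := x in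
  [/\ ghost_inv w G, cf_state c = gstate G,
      ~~ ghost_halted (gstate G) ->
        cf_head c = ghead G /\ forall r, cf_regs c r = ghost_regs eps^-1 G r,
      0 <= p <= 1 & if gok G then p = 1 else p <= eps].

Lemma expected_prob_step (c : vconfig V) (G : ghost) :
  cf_state c = gstate G -> cf_head c = ghead G ->
  (forall r, cf_regs c r = ghost_regs eps^-1 G r) ->
  let po := outcome_prob P w c (expected_at c) in
  exists2 b, gok (ghost_step w G (P w (cf_hist c))) = gok G && b &
    [/\ 0 <= po <= 1, b -> po = 1 & ~~ b -> po <= eps].
Proof.
move=> Hst Hhd Hr /=.
rewrite /outcome_prob /expected_at Hst Hhd expected_outcome_prob /ghost_step.
case E: (gstate G) => [|????|????|par acc||];
  try by exists true; rewrite ?andbT //; split; rewrite ?ler01 ?lexx.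
set prev := next_record (last [::] (grecords G)).
exists (gcur G == prev) => //.
rewrite Hr /ghost_regs E eqxx weigh_compare_vec pass_prob_bounds.
split => // [/eqP ->|/eqP Hne]; first exact: pass_prob_eq.
by apply: pass_prob_neq => // /code_inj Heq; apply: Hne.
Qed.

Lemma coupled_step_inv x : coupled x -> coupled (coupled_step x).
Proof.
case: x => [[c p] G] [HI Hst Hrg /andP [Hp0 Hp1] Hok] /=.
case: ifP => Hh; first by split => //; apply/andP.
have HhG : ~~ ghost_halted (gstate G).
  by rewrite /ghost_halted -Hst; move: Hh; rewrite /halted /= => ->.
have [Hhd Hr] := Hrg HhG.
have [b Hb [/andP [Ho0 Ho1] Hb1 Hb0]] := expected_prob_step Hst Hhd Hr.
have Ho : expected_at c =
    verifier_expected (gstate G) (tape_at w (ghead G)) (P w (cf_hist c)).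
  by rewrite /expected_at Hst Hhd.
have Hnx : v_next V (cf_state c) (tape_at w (cf_head c)) (P w (cf_hist c)) (expected_at c) =
    control (gstate G) (tape_at w (ghead G)) (P w (cf_hist c)).
  by rewrite Ho Hst Hhd /= /vnext eqxx.
rewrite childE Hnx; split => //.
- exact: ghost_inv_step.
- move=> Hh'; split; first by rewrite Hhd.
  by move=> r /=; rewrite Ho Hr Hst Hhd; apply: ghost_regs_step.
- by rewrite mulr_ge0 ?mulr_ile1.
- rewrite {}Hb; case: (gok G) Hok => /= Hok; last by apply: le_trans Hok; rewrite ler_piMr.
  by case: b Hb1 Hb0 => [-> // | _ Hb0]; rewrite Hok ?mulr1 // mul1r Hb0.
Qed.

Lemma coupled_run_inv t : coupled (coupled_run t).
Proof.
elim: t => [|t IH]; last by rewrite /coupled_run iterS; apply: coupled_step_inv.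
by split => //=; rewrite ?ler01 ?lexx //; split => //; case.
Qed.

Lemma verifier_sound : ~ tm_accepts M w -> acc_prob_le P w eps.
Proof.
move=> Hw t.
rewrite (acc_prob_by_expected verifier_unexpected_rejects verifier_acc_rej) -coupled_run_fst.
case: (coupled_run t) (coupled_run_inv t) => [[c p] [q hd rs cur ok]] [HI /= -> _ _ Hok].
case: eqP => [Ha|_]; last exact: ltW.
rewrite Ha in HI; case: ok Hok HI => // _ /(_ erefl) [Hh Hn Hacc].
by case: Hw; apply: history_accepts Hh Hn Hacc.
Qed.

End Soundness.

(** * Completeness *)

Section HonestRun.
Variables (Sigma : finType) (M : TM Sigma) (w : seq Sigma).

Local Notation cell := (cell M).
Local Notation blank_cell := (blank_cell M).
Local Notation ghost := (ghost M).
Local Notation ghost_step := (ghost_step w).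
Local Notation ghost_init := (ghost_init M).

Definition ghost_run (G : ghost) (s : seq (option cell)) : ghost :=
  foldl (fun G g => if ghost_halted (gstate G) then G else ghost_step G g) G s.

Lemma ghost_run_cat G s1 s2 : ghost_run G (s1 ++ s2) = ghost_run (ghost_run G s1) s2.
Proof. by rewrite /ghost_run foldl_cat. Qed.

Lemma ghost_run_halted G s : ghost_halted (gstate G) -> ghost_run G s = G.
Proof. by move=> H; elim: s => //= g s IH; rewrite H. Qed.

Lemma ghost_run_cons G g s :
  ~~ ghost_halted (gstate G) -> ghost_run G (g :: s) = ghost_run (ghost_step G g) s.
Proof. by move=> H; rewrite /= (negbTE H). Qed.

Lemma ghost_inv_run G s : ghost_inv w G -> ghost_inv w (ghost_run G s).
Proof.
elim: s G => //= g s IH G HG; apply: IH.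
by case: ifP => // /negbT H; apply: ghost_inv_step.
Qed.

Lemma ghost_run_blanks k p2 p1 acc cur : exists p2' p1' acc',
  ghost_run (Ghost (VFirst false p2 p1 acc) 1 [::] cur true) (map Some (nseq k blank_cell)) =
  Ghost (VFirst false p2' p1' acc') 1 [::] (cur ++ nseq k blank_cell) true.
Proof.
elim: k p2 p1 acc cur => [|k IH] p2 p1 acc cur; first by exists p2, p1, acc; rewrite cats0.
rewrite /= -/(ghost_run _ _) /ghost_step /= eqxx /=.
have [p2' [p1' [acc' ->]]] := IH (shift p2 p1 blank_cell).1 (shift p2 p1 blank_cell).2
  (acc || is_acc_cell blank_cell) (rcons cur blank_cell).
by exists p2', p1', acc'; rewrite cat_rcons.
Qed.

Lemma ghost_run_head_cell p2 p1 acc cur : exists p2' p1' acc',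
  ghost_run (Ghost (VFirst false p2 p1 acc) 1 [::] cur true)
    [:: Some (input_symbol M w 0, Some (tm_start M))] =
  Ghost (VFirst true p2' p1' acc') (minn 2 (size w).+1) [::]
    (rcons cur (input_symbol M w 0, Some (tm_start M))) true.
Proof.
rewrite /= /ghost_step /=.
have -> : ((input_symbol M w 0, Some (tm_start M)) == blank_cell) = false by apply/eqP; case.
have := tape_cell_at M w 0; rewrite (_ : minn 1 (size w).+1 = 1%N); last by lia.
by move=> ->; rewrite eqxx /=; do 3!eexists.
Qed.

Lemma ghost_run_input j m p2 p1 acc cur : exists p2' p1' acc',
  ghost_run (Ghost (VFirst true p2 p1 acc) (minn j.+1 (size w).+1) [::] cur true)
    (map Some [seq (input_symbol M w i, None) | i <- iota j m]) =
  Ghost (VFirst true p2' p1' acc') (minn (j + m).+1 (size w).+1) [::]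
    (cur ++ [seq (input_symbol M w i, None) | i <- iota j m]) true.
Proof.
elim: m j p2 p1 acc cur => [|m IH] j p2 p1 acc cur.
  by exists p2, p1, acc; rewrite addn0 cats0.
rewrite /= -/(ghost_run _ _) /ghost_step /= tape_cell_at eqxx /=.
have -> : minn (minn j.+1 (size w).+1).+1 (size w).+1 = minn j.+2 (size w).+1 by lia.
have [p2' [p1' [acc' ->]]] := IH j.+1 (shift p2 p1 (input_symbol M w j, None)).1
  (shift p2 p1 (input_symbol M w j, None)).2
  (acc || is_acc_cell (input_symbol M w j, None)) (rcons cur (input_symbol M w j, None)).
by exists p2', p1', acc'; rewrite cat_rcons addSnnS.
Qed.

Lemma input_cells_split n : (0 < n)%N ->
  input_cells M w n =
  (input_symbol M w 0, Some (tm_start M)) :: [seq (input_symbol M w i, None) | i <- iota 1 n.-1].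
Proof.
case: n => // n _; rewrite /input_cells /=.
by congr cons; apply/eq_in_map => j; rewrite mem_iota => /andP [Hj _]; case: j Hj.
Qed.

Lemma ghost_run_initial_cells k n : (0 < n)%N ->
  let r0 := nseq k blank_cell ++ input_cells M w n in
  exists p2 p1 acc,
    ghost_run ghost_init (None :: map Some r0) =
    Ghost (VFirst true p2 p1 acc) (minn n.+1 (size w).+1) [::] r0 true.
Proof.
move=> Hn r0; rewrite ghost_run_cons // /ghost_step /=.
rewrite (_ : minn 1 (size w).+1 = 1%N); last by lia.
rewrite /r0 map_cat ghost_run_cat.
have [p2 [p1 [acc ->]]] := ghost_run_blanks k (blank_cell) None false [::].
rewrite input_cells_split // map_cons -cat1s ghost_run_cat.
have [p2' [p1' [acc' ->]]] := ghost_run_head_cell p2 p1 acc ([::] ++ nseq k blank_cell).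
have [p2'' [p1'' [acc'' ->]]] := ghost_run_input 1 n.-1 p2' p1' acc'
  (rcons ([::] ++ nseq k blank_cell) (input_symbol M w 0, Some (tm_start M))).
by exists p2'', p1'', acc''; rewrite add1n prednK // cat_rcons.
Qed.

Lemma ghost_run_initial r0 : initial_record w r0 ->
  exists hd, ghost_run ghost_init (None :: map Some r0 ++ [:: None]) =
  Ghost (if has_acc r0 then VAcc else VRead true blank_cell None false) hd [:: r0] [::] true.
Proof.
case=> k [n [Hn Hw Er0]].
have [p2 [p1 [acc E]]] := ghost_run_initial_cells k Hn.
rewrite -Er0 in E.
have := ghost_inv_run (None :: map Some r0) (ghost_inv_init M w).
rewrite E => -[_ _ _ Ha _].
rewrite -cat_cons ghost_run_cat E /= /ghost_step /= is_rend_at Hw /= -Ha.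
by exists (move_head w (minn n.+1 (size w).+1) MoveS); case: acc {Ha E}.
Qed.

Lemma ghost_run_cells par p2 p1 acc hd rs cur ok (r : seq cell) : exists p2' p1' acc',
  ghost_run (Ghost (VRead par p2 p1 acc) hd rs cur ok) (map Some r) =
  Ghost (VRead par p2' p1' acc') hd rs (cur ++ r) ok.
Proof.
elim: r p2 p1 acc cur => [|c r IH] p2 p1 acc cur; first by exists p2, p1, acc; rewrite cats0.
rewrite /= -/(ghost_run _ _) /ghost_step /=.
have [p2' [p1' [acc' ->]]] :=
  IH (shift p2 p1 c).1 (shift p2 p1 c).2 (acc || is_acc_cell c) (rcons cur c).
by exists p2', p1', acc'; rewrite cat_rcons.
Qed.

(* A later record is sent followed by two end markers: the second one is read
   (and ignored) while the comparison register is weighed. *)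
Definition record_block (r : seq cell) : seq (option cell) := map Some r ++ [:: None; None].

Lemma ghost_run_record par hd rs ok r :
  ghost_inv w (Ghost (VRead par blank_cell None false) hd rs [::] ok) ->
  ghost_run (Ghost (VRead par blank_cell None false) hd rs [::] ok) (record_block r) =
  Ghost (if has_acc r then VAcc else VRead (~~ par) blank_cell None false) hd (rcons rs r) [::]
    (ok && (r == next_record (last [::] rs))).
Proof.
move=> HI; rewrite /record_block ghost_run_cat.
have [p2' [p1' [acc' E]]] := ghost_run_cells par blank_cell None false hd rs [::] ok r.
have := ghost_inv_run (map Some r) HI; rewrite E => -[_ _ Ha _].
by rewrite /= /ghost_step /= Ha /=; case: (has_acc r).
Qed.

Lemma ghost_run_records rest : forall par hd rs,
  ghost_inv w (Ghost (VRead par blank_cell None false) hd rs [::] true) ->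
  fpath next_record (last [::] rs) rest -> has has_acc rest ->
  let G := ghost_run (Ghost (VRead par blank_cell None false) hd rs [::] true)
             (flatten (map record_block rest)) in
  gstate G = VAcc /\ gok G.
Proof.
elim: rest => [|r rest IH] par hd rs HI //= /andP [/eqP Er Hp] Hacc.
rewrite ghost_run_cat ghost_run_record // Er eqxx /=.
case: ifP Hacc => [_ _|Har /= Hacc]; first by rewrite ghost_run_halted.
apply: IH; rewrite ?last_rcons //.
by have := ghost_inv_run (record_block r) HI; rewrite ghost_run_record // Er eqxx Har.
Qed.

Definition honest_stream (r0 : seq cell) (m : nat) : seq (option cell) :=
  None :: map Some r0 ++
  None :: flatten (map record_block (traject next_record (next_record r0) m)).

Lemma ghost_run_honest r0 m : initial_record w r0 -> has_acc (iter m next_record r0) ->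
  let G := ghost_run ghost_init (honest_stream r0 m) in gstate G = VAcc /\ gok G.
Proof.
move=> H0 Hm.
have -> : honest_stream r0 m = (None :: map Some r0 ++ [:: None]) ++
    flatten (map record_block (traject next_record (next_record r0) m)) by rewrite /= -catA.
have [hd E] := ghost_run_initial H0.
have := ghost_inv_run (None :: map Some r0 ++ [:: None]) (ghost_inv_init M w).
rewrite ghost_run_cat E; case: ifP => Har HI; first by rewrite ghost_run_halted.
apply: ghost_run_records => //=; first exact: fpath_traject.
set rest := traject _ _ m.
have Hacc : has_acc (last r0 rest) by rewrite last_traject.
have := mem_last r0 rest; rewrite inE => /orP [/eqP El|Hin]; first by rewrite El Har in Hacc.
by apply/hasP; exists (last r0 rest).
Qed.

End HonestRun.

Section Completeness.
Variables (Sigma : finType) (M : TM Sigma) (eps : rat).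
Hypothesis eps_gt0 : 0 < eps.

Local Notation V := (verifier M eps^-1).
Local Notation cell := (cell M).

Definition accepting_witness (w : seq Sigma) (x : seq cell * nat) : Prop :=
  initial_record w x.1 /\ has_acc (iter x.2 next_record x.1).

Definition honest_messages (w : seq Sigma) : seq (option cell) :=
  let x := epsilon (inhabits ([::], 0%N)) (accepting_witness w) in honest_stream x.1 x.2.

(* The history has one entry per step, so its size is the current time. *)
Definition honest_prover : prover V :=
  fun w hist => nth None (honest_messages w) (size hist).

Lemma coupled_run_honest w t : (t <= size (honest_messages w))%N ->
  let x := coupled_run w honest_prover t in
  x.2 = ghost_run w (ghost_init M) (take t (honest_messages w)) /\
  (~~ ghost_halted (gstate x.2) -> size (cf_hist x.1.1) = t).
Proof.
elim: t => [|t IH] Ht; first by rewrite take0.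
have [IH1 IH2] := IH (ltnW Ht).
have HJ := coupled_run_inv eps_gt0 w honest_prover t.
rewrite /coupled_run iterS -/(coupled_run w honest_prover t).
rewrite (take_nth None Ht) /ghost_run foldl_rcons -/(ghost_run w _ _) -IH1.
case: (coupled_run w honest_prover t) HJ IH1 IH2 => [[c p] G] [_ Hst _ _ _] /= _ IH2.
rewrite (_ : halted (cf_state c) = ghost_halted (gstate G)); last by rewrite Hst.
case: (boolP (ghost_halted (gstate G))) => HG /=; first by rewrite HG.
have Hs := IH2 HG.
by rewrite childE /= size_rcons Hs /honest_prover Hs.
Qed.

Lemma verifier_complete w : tm_accepts M w -> acc_prob_ge honest_prover w 1.
Proof.
move=> Hacc d Hd.
have [r0 [m H]] := accepting_history_exists Hacc.
have [H0 Hm] := epsilon_spec (inhabits ([::], 0%N)) (accepting_witness w) (ex_intro _ (r0, m) H).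
have [Gacc Gok] := ghost_run_honest H0 Hm.
set T := size (honest_messages w).
have [E _] := coupled_run_honest (leqnn T); rewrite take_size in E.
exists T.
rewrite (acc_prob_by_expected (@verifier_unexpected_rejects _ M eps) (@verifier_acc_rej _ M eps)).
rewrite -coupled_run_fst.
case: (coupled_run w honest_prover T) (coupled_run_inv eps_gt0 w honest_prover T) E
  => [[c p] G] [_ Hst _ _ Hok] /= EG.
rewrite Hst EG Gacc eqxx.
rewrite EG Gok in Hok; rewrite Hok.
by rewrite lerBlDr lerDl ltW.
Qed.

End Completeness.

Theorem theorem4 (Sigma : finType) (L : seq Sigma -> Prop) :
  TM_recognizable L ->
  forall eps : rat, 0 < eps -> eps < 1 / 2 ->
  exists V : Verifier Sigma, wf_verifier V /\ weakly_verifies_perfect V L eps.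
Proof.
(* Soundness holds for every positive [eps]. *)
case=> M HM eps Heps _.
exists (verifier M eps^-1); split; first exact: verifier_wf.
split; first by exists (honest_prover (M:=M) (eps:=eps)) => w /HM; apply: verifier_complete.
by move=> w HnL P; apply: verifier_sound => // /HM.
Qed.
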